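(* Let $r \in \mathbb{Q}_{>0}$ be such that $S_r$ is atomic. Then: (1) $S_r$ is a BF-monoid if and only if $r \ge 1$. (2) If $r \in \mathbb{N}$, then $S_r \cong \mathbb{N}_0$, and $\Delta(x) = \emptyset$ and $\mathsf{c}(x) = 0$ for all $x \in S_r \setminus\{0\}$. (3) If $r \notin \mathbb{N}$, then $\Delta(x) = \{|\mathsf{n}(r) - \mathsf{d}(r)|\}$ for every $x \in S_r$ with $|\mathsf{Z}(x)| > 1$; hence $\Delta(S_r) = \{|\mathsf{n}(r) - \mathsf{d}(r)|\}$. (4) If $r \notin \mathbb{N}$, then $\mathsf{Ca}(S_r) = \{\max\{\mathsf{n}(r), \mathsf{d}(r)\}\}$; hence $\mathsf{c}(S_r) = \max\{\mathsf{n}(r), \mathsf{d}(r)\}$.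
   Context: For $q \in \mathbb{Q}_{>0}$, $\mathsf{n}(q),\mathsf{d}(q)$ are the positive coprime integers with $q = \mathsf{n}(q)/\mathsf{d}(q)$. $S_r$ is the additive submonoid of $(\mathbb{Q}_{\ge 0},+)$ generated by $\{r^n : n \in \mathbb{N}_0\}$; it is atomic exactly when $r=1$ or $\mathsf{n}(r)>1$, and for $r \notin \mathbb{N}$ atomic its atoms are the elements $r^n$, $n \in \mathbb{N}_0$. Factorizations of $x$ are elements of the free commutative monoid $\mathsf{Z}(S_r)$ on the atoms mapping to $x$; $\mathsf{Z}(x)$ is their set, $|z|$ the length (number of atoms with multiplicity), $\mathsf{L}(x)$ the set of lengths. $S_r$ is a BF-monoid if $\mathsf{L}(x)$ is finite for all $x$. For $x \ne 0$, $d \in \mathbb{N}$ is a distance of $x$ if $\mathsf{L}(x) \cap \{\ell, \ell+1, \dots, \ell+d\} = \{\ell, \ell+d\}$ for some $\ell \in \mathsf{L}(x)$; $\Delta(x)$ is the set of such $d$ and $\Delta(S_r) = \bigcup_{x \neq 0} \Delta(x)$. For factorizations $z = \sum_a \mu_a a$, $z' = \sum_a \nu_a a$, $\gcd(z,z') = \sum_a \min\{\mu_a,\nu_a\} a$ and $\mathsf{d}(z,z') = \max\{|z| - |\gcd(z,z')|, |z'| - |\gcd(z,z')|\}$. An $N$-chain from $z$ to $z'$ in $\mathsf{Z}(x)$ is a sequence $z=z_0, \dots, z_k = z'$ in $\mathsf{Z}(x)$ with $\mathsf{d}(z_{i-1}, z_i) \le N$. The catenary degree $\mathsf{c}(x)$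 is the least $N \in \mathbb{N}_0 \cup \{\infty\}$ such that any two factorizations of $x$ are connected by an $N$-chain; $\mathsf{c}(S_r) = \sup_x \mathsf{c}(x)$ and $\mathsf{Ca}(S_r) = \{\mathsf{c}(x) : x \in S_r, \mathsf{c}(x) > 0\}$. *)

From HB Require Import structures.
From mathcomp Require Import all_boot all_order all_algebra.
Set Implicit Arguments. Unset Strict Implicit. Unset Printing Implicit Defensive.
Import Order.TTheory GRing.Theory Num.Theory.
Local Open Scope ring_scope.

Definition inSr (r x : rat) : Prop := exists s : seq nat, x = \sum_(n <- s) r ^+ n.

(* atoms of the reduced monoid S_r (its only unit is 0) *)
Definition is_atom (r a : rat) : Prop :=
  [/\ inSr r a, a != 0 &
      forall b c, inSr r b -> inSr r c -> a = b + c -> b = 0 \/ c = 0].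

Definition atomic (r : rat) : Prop :=
  forall x, inSr r x -> x != 0 ->
    exists s : seq rat, (forall a, a \in s -> is_atom r a) /\ x = \sum_(a <- s) a.

(* A factorization (element of the free commutative monoid on the atoms) is
   represented canonically by the <=-sorted list of its atoms (with multiplicity). *)
Definition is_fact (r x : rat) (z : seq rat) : Prop :=
  [/\ sorted <=%R z, (forall a, a \in z -> is_atom r a) & \sum_(a <- z) a = x].

Definition inL (r x : rat) (l : nat) : Prop := exists z, is_fact r x z /\ size z = l.

(* BF-monoid: L(x) finite (equivalently bounded, being a set of naturals) for all x *)
Definition BF (r : rat) : Prop :=
  forall x, inSr r x -> exists N : nat, forall l, inL r x l -> (l <= N)%N.

Definition in_Delta (r x : rat) (d : nat) : Prop :=
  (0 < d)%N /\ exists l, [/\ inL r x l, inL r x (l + d) &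
                           forall k, (l < k < l + d)%N -> ~ inL r x k].

Definition gcd_size (z z' : seq rat) : nat :=
  \sum_(a <- undup z) minn (count_mem a z) (count_mem a z').

Definition fdist (z z' : seq rat) : nat :=
  maxn (size z - gcd_size z z') (size z' - gcd_size z z').

Definition chain (r x : rat) (N : nat) (z z' : seq rat) : Prop :=
  exists s : seq (seq rat),
    [/\ forall u, u \in s -> is_fact r x u,
        path (fun u v => fdist u v <= N)%N z s & last z s = z'].

Definition catenary_ok (r x : rat) (N : nat) : Prop :=
  forall z z', is_fact r x z -> is_fact r x z' -> chain r x N z z'.

(* c(x) = c, where c : option nat and None stands for infinity *)
Definition cat_deg_is (r x : rat) (c : option nat) : Prop :=
  match c with
  | Some N => catenary_ok r x N /\ forall M, catenary_ok r x M -> (N <= M)%N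
  | None => forall N, ~ catenary_ok r x N
  end.

Definition nr (r : rat) : nat := absz (numq r).
Definition dr (r : rat) : nat := absz (denq r).

From HB Require Import structures.
From mathcomp Require Import all_boot all_order all_algebra.
From mathcomp Require Import zify ring.
Set Implicit Arguments. Unset Strict Implicit. Unset Printing Implicit Defensive.
Import Order.TTheory GRing.Theory Num.Theory.

(* If r = k is an integer, the only atom is 1, S_r is N_0 and factorizations
   are unique.  Otherwise atomicity forces r = n/d in lowest terms with
   n, d > 1.  A factorization is then a multiset of exponents, and the basic
   "move" replaces n copies of r^k by d copies of r^(k+1): it changes the
   length by gap = |n - d| and has distance max(n, d).  The key arithmetic
   fact (rigidity) is that two different multisets of the same value differ
   at an exponent where their multiplicities are congruent mod n and at a
   larger one where they are congruent mod d; it is proved by clearing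
   denominators in the mixed-radix expansion and reading off the lowest and
   highest digits.  Consequently distinct factorizations are at distance at
   least max(n, d), and the multisets admitting no length-decreasing move
   ("reduced" ones) are unique.  Reducing along moves then shows that the
   lengths of x form an arithmetic progression with difference gap starting
   at the reduced length, and that every element has catenary degree
   max(n, d) or 0, which yields parts (3) and (4); part (1) compares r with 1. *)

(* [mixed_horner a b [:: c_0; ...; c_(L-1)]] = \sum_i c_i * a ^ i * b ^ (L-1-i):
   the numerator of c_0 + c_1 (a/b) + ... + c_(L-1) (a/b)^(L-1) over b^(L-1). *)
Fixpoint mixed_horner (a b : nat) (cs : seq nat) : nat :=
  if cs is c :: cs' then c * b ^ size cs' + a * mixed_horner a b cs' else 0.

Lemma mixed_horner_rcons a b cs c :
  mixed_horner a b (rcons cs c) = b * mixed_horner a b cs + c * a ^ size cs.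
Proof.
elim: cs => [|x cs IH] /=; first by rewrite !muln0 expn0 !addn0 muln1.
rewrite size_rcons IH !expnS.
set X := b ^ size cs; set Y := a ^ size cs; set Z := mixed_horner a b cs; nia.
Qed.

Lemma mixed_horner_rev a b cs : mixed_horner a b (rev cs) = mixed_horner b a cs.
Proof.
elim: cs => [|c cs IH] //=.
by rewrite rev_cons mixed_horner_rcons IH size_rev addnC.
Qed.

Lemma coprime_modn_mulr_cancel a c x y :
  coprime a c -> x * c = y * c %[mod a] -> x = y %[mod a].
Proof.
move=> co.
wlog le_yx : x y / y <= x.
  move=> H; have [/H//|/ltnW le_xy] := leqP y x.
  by move/esym/H => ->.
move/eqP; rewrite eqn_mod_dvd ?leq_mul2r ?le_yx ?orbT // -mulnBl.
by rewrite mulnC Gauss_dvdr // -eqn_mod_dvd // => /eqP.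
Qed.

Lemma mixed_horner_first_diff a b cs cs' :
  coprime a b -> 0 < a -> size cs = size cs' ->
  mixed_horner a b cs = mixed_horner a b cs' -> cs <> cs' ->
  exists j, [/\ j < size cs, nth 0 cs j <> nth 0 cs' j,
    (forall i, i < j -> nth 0 cs i = nth 0 cs' i) &
    nth 0 cs j = nth 0 cs' j %[mod a]].
Proof.
move=> co a_gt0; elim: cs cs' => [|c cs IH] [|c' cs'] //= [eq_size] eq_val neq.
have [eq_c|neq_c] := eqVneq c c'.
  subst c'; have eq_val' : mixed_horner a b cs = mixed_horner a b cs'.
    move: eq_val; rewrite eq_size => /addnI /eqP.
    by rewrite eqn_pmul2l // => /eqP.
  have [j [j_lt neq_j below_j congr_j]] :=
    IH cs' eq_size eq_val' (fun e => neq (congr1 _ e)).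
  by exists j.+1; split => // -[|i] //= /below_j.
exists 0; split => //; first exact/eqP.
apply: (@coprime_modn_mulr_cancel _ (b ^ size cs)); first by rewrite coprimeXr.
move: eq_val => /(congr1 (modn^~ a)); rewrite eq_size.
by rewrite ![(_ + a * _)]addnC ![a * _]mulnC !modnMDl.
Qed.

Lemma mixed_horner_last_diff a b cs cs' :
  coprime a b -> 0 < b -> size cs = size cs' ->
  mixed_horner a b cs = mixed_horner a b cs' -> cs <> cs' ->
  exists j, [/\ j < size cs, nth 0 cs j <> nth 0 cs' j,
    (forall i, j < i < size cs -> nth 0 cs i = nth 0 cs' i) &
    nth 0 cs j = nth 0 cs' j %[mod b]].
Proof.
move=> co b_gt0 eq_size eq_val neq.
have co' : coprime b a by rewrite coprime_sym.
have eq_size' : size (rev cs) = size (rev cs') by rewrite !size_rev.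
have eq_val' : mixed_horner b a (rev cs) = mixed_horner b a (rev cs').
  by rewrite !mixed_horner_rev.
have neq' : rev cs <> rev cs'.
  by move=> e; apply: neq; rewrite -(revK cs) e revK.
have [k [k_lt]] := mixed_horner_first_diff co' b_gt0 eq_size' eq_val' neq'.
rewrite size_rev in k_lt; rewrite !nth_rev -?eq_size //.
set L := size cs in k_lt *; move=> neq_j below_k congr_j.
exists (L - k.+1); split => //; first by rewrite /L; lia.
move=> i /andP [lt_ji lt_i].
have lt_k : L - i.+1 < k by lia.
have idx : L - (L - i.+1).+1 = i by lia.
by move: (below_k _ lt_k); rewrite !nth_rev -?eq_size -/L ?idx //; lia.
Qed.

Lemma congr_dist a x y : x = y %[mod a] -> x <> y -> y + a <= x \/ x + a <= y.
Proof.
wlog le_yx : x y / y <= x.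
  move=> H eq_xy neq_xy; have [/H|/ltnW /H] := leqP y x.
    by move=> /(_ eq_xy neq_xy).
  by move=> /(_ (esym eq_xy) (nesym neq_xy)) [|]; [right|left].
move/eqP; rewrite eqn_mod_dvd // => dvd_a neq; left.
have : 0 < x - y by rewrite subn_gt0 ltn_neqAle le_yx andbT; apply/eqP/nesym.
by move=> /dvdn_leq /(_ dvd_a); lia.
Qed.

Lemma sum_count_mem (T : eqType) (t z : seq T) : uniq t -> {subset z <= t} ->
  \sum_(a <- t) count_mem a z = size z.
Proof.
move=> t_uniq; elim: z => [|b z IH] z_sub /=; first by rewrite big1.
rewrite big_split /= IH; last by move=> x zx; apply: z_sub; rewrite inE zx orbT.
rewrite -[(size z).+1]add1n; congr addn.
rewrite (bigD1_seq b) ?z_sub ?inE ?eqxx //= big1 // => i.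
by rewrite eq_sym => /negPf ->.
Qed.

Lemma sum_undup_extend (T : eqType) (t z : seq T) (F : T -> nat) :
  uniq t -> {subset z <= t} -> (forall a, a \notin z -> F a = 0) ->
  \sum_(a <- undup z) F a = \sum_(a <- t) F a.
Proof.
move=> t_uniq z_sub F0.
rewrite [RHS](bigID (mem z)) /= [X in _ + X]big1 ?addn0; last by move=> a /F0.
rewrite -[RHS]big_filter; apply: perm_big.
apply: uniq_perm => [||x]; [exact: undup_uniq|exact: filter_uniq|].
by rewrite mem_undup mem_filter; case: (boolP (x \in z)) => // /z_sub ->.
Qed.

Lemma fdist_counts (t z z' : seq rat) :
  uniq t -> {subset z <= t} -> {subset z' <= t} ->
  fdist z z' = maxn (\sum_(a <- t) (count_mem a z - count_mem a z'))
                    (\sum_(a <- t) (count_mem a z' - count_mem a z)).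
Proof.
move=> t_uniq z_sub z'_sub; rewrite /fdist.
have -> : gcd_size z z' = \sum_(a <- t) minn (count_mem a z) (count_mem a z').
  by apply: sum_undup_extend => // a /count_memPn ->; rewrite min0n.
rewrite -{1}(sum_count_mem t_uniq z_sub) -{1}(sum_count_mem t_uniq z'_sub).
rewrite -!sumnB => [|a _|a _]; [|exact: geq_minr|exact: geq_minl].
by congr maxn; apply: eq_bigr => a _; lia.
Qed.

Lemma fdistC (z z' : seq rat) : fdist z z' = fdist z' z.
Proof.
have t_uniq := undup_uniq (z ++ z').
have sub_l : {subset z <= undup (z ++ z')}.
  by move=> a za; rewrite mem_undup mem_cat za.
have sub_r : {subset z' <= undup (z ++ z')}.
  by move=> a za; rewrite mem_undup mem_cat za orbT.
by rewrite !(fdist_counts t_uniq) // maxnC.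
Qed.

Lemma chain_refl r x N z : chain r x N z z.
Proof. by exists [::]. Qed.

Lemma chain_cons r x N z u z' :
  fdist z u <= N -> is_fact r x u -> chain r x N u z' -> chain r x N z z'.
Proof.
move=> le_zu fact_u [s [fact_s path_s last_s]]; exists (u :: s); split => //=.
- by move=> v; rewrite inE => /orP [/eqP ->|/fact_s].
- by rewrite le_zu.
Qed.

Lemma chain_trans r x N z u z' :
  chain r x N z u -> chain r x N u z' -> chain r x N z z'.
Proof.
move=> [s [fact_s path_s last_s]] [s' [fact_s' path_s' last_s']].
exists (s ++ s'); split.
- by move=> v; rewrite mem_cat => /orP [/fact_s|/fact_s'].
- by rewrite cat_path path_s last_s path_s'.
- by rewrite last_cat last_s.
Qed.

Lemma chain_sym r x N z z' : is_fact r x z -> chain r x N z z' -> chain r x N z' z.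
Proof.
move=> fact_z [s []]; elim: s z fact_z => [|u s IH] z fact_z fact_s /=.
  by move=> _ <-; apply: chain_refl.
move=> /andP [le_zu path_s] last_s.
have fact_u : is_fact r x u by apply: fact_s; rewrite mem_head.
have fact_s' : forall v, v \in s -> is_fact r x v.
  by move=> v sv; apply: fact_s; rewrite inE sv orbT.
have ch := IH u fact_u fact_s' path_s last_s.
apply: chain_trans ch _; apply: (chain_cons _ fact_z); first by rewrite fdistC.
exact: chain_refl.
Qed.

Lemma chain_distinct_link r x N z z' :
  is_fact r x z -> chain r x N z z' -> z <> z' ->
  exists u v, [/\ is_fact r x u, is_fact r x v, u <> v & fdist u v <= N].
Proof.
move=> fact_z [s []]; elim: s z fact_z => [|u s IH] z fact_z fact_s /=.
  by move=> _ ->.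
move=> /andP [le_zu path_s] last_s neq.
have fact_u : is_fact r x u by apply: fact_s; rewrite mem_head.
have [eq_zu|neq_zu] := eqVneq z u.
  subst u; apply: (IH z fact_z _ path_s last_s neq).
  by move=> v sv; apply: fact_s; rewrite inE sv orbT.
by exists z, u; split => //; apply/eqP.
Qed.

Local Open Scope ring_scope.

Lemma atom_is_power r a : 0 < r -> is_atom r a -> exists k, a = r ^+ k.
Proof.
move=> r_gt0 [[[|k s] ->] a_neq0 a_atom]; first by rewrite big_nil eqxx in a_neq0.
exists k.
have Sr_k : inSr r (r ^+ k) by exists [:: k]; rewrite big_seq1.
have Sr_s : inSr r (\sum_(i <- s) r ^+ i) by exists s.
rewrite big_cons; case: (a_atom _ _ Sr_k Sr_s (big_cons _ _ _ _ _ _)) => [/eqP|->].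
- by rewrite expf_eq0 (negPf (lt0r_neq0 r_gt0)) andbF.
- by rewrite addr0.
Qed.

Section NonIntegral.

Variables (r : rat) (n d : nat).
Hypotheses (n_gt1 : (1 < n)%N) (d_gt1 : (1 < d)%N) (coprime_nd : coprime n d)
  (r_nd : r * d%:R = n%:R).

(* The value of a multiset of exponents: a factorization r^k_1 + ... + r^k_m
   is encoded by the list [:: k_1; ...; k_m]. *)
Definition value (s : seq nat) : rat := \sum_(k <- s) r ^+ k.

Lemma d_neq0 : (d%:R : rat) != 0.
Proof. by rewrite pnatr_eq0 -lt0n ltnW. Qed.

Lemma r_gt0 : 0 < r.
Proof.
have : 0 < r * d%:R by rewrite r_nd ltr0n ltnW.
by rewrite pmulr_lgt0 // ltr0n ltnW.
Qed.

Lemma n_neq_d : n != d.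
Proof.
apply/eqP=> eq_nd; move: coprime_nd; rewrite eq_nd /coprime gcdnn => /eqP d1.
by move: d_gt1; rewrite d1.
Qed.

Lemma expr_r_inj : injective (fun k => r ^+ k).
Proof.
have r_neq1 : r != 1.
  apply/eqP => r1; move: r_nd; rewrite r1 mul1r => /eqP.
  by rewrite eqr_nat eq_sym (negPf n_neq_d).
exact: ieexprIn r_gt0 r_neq1.
Qed.

Lemma value_cat s s' : value (s ++ s') = value s + value s'.
Proof. by rewrite /value big_cat. Qed.

Lemma value_perm s s' : perm_eq s s' -> value s = value s'.
Proof. by move=> perm_ss'; rewrite /value (perm_big _ perm_ss'). Qed.

Lemma value_nseq m k : value (nseq m k) = m%:R * r ^+ k.
Proof.
rewrite /value big_nseq mulr_natl.
by elim: m => [|m IH] /=; rewrite ?mulr0n // IH mulrS.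
Qed.

Lemma value_move k w : value (nseq n k ++ w) = value (nseq d k.+1 ++ w).
Proof. by rewrite !value_cat !value_nseq exprS mulrA [d%:R * r]mulrC r_nd. Qed.

Lemma value_eq0 s : (value s == 0) = (s == [::]).
Proof.
case: s => [|k s]; first by rewrite /value big_nil eqxx.
rewrite /value big_cons /=; apply/negbTE; rewrite gt_eqF // ltr_pwDl //.
- by rewrite exprn_gt0 // r_gt0.
- by apply: sumr_ge0 => i _; rewrite exprn_ge0 // ltW // r_gt0.
Qed.

Lemma value_counts s L : (forall k, k \in s -> k < L)%N ->
  value s = \sum_(i < L) (count_mem (i : nat) s)%:R * r ^+ i.
Proof.
elim: s => [|k s IH] s_lt.
  by rewrite /value big_nil big1 // => i _; rewrite mul0r.
rewrite /value big_cons -/(value s) IH => [|x sx]; last by rewrite s_lt // inE sx orbT.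
have k_lt : (k < L)%N by rewrite s_lt ?mem_head.
rewrite (bigD1 (Ordinal k_lt)) //= [in RHS](bigD1 (Ordinal k_lt)) //= eqxx.
rewrite natrD mulrDl mul1r addrA; congr (_ + _).
apply: eq_bigr => i neq_ik; congr (_%:R * _).
suff /negbTE -> : k != i by [].
by apply: contra neq_ik => /eqP ki; apply/eqP/val_inj.
Qed.

Lemma mixed_horner_value cs : (mixed_horner n d cs)%:R * d%:R =
  (\sum_(i < size cs) (nth 0%N cs i)%:R * r ^+ i) * d%:R ^+ size cs.
Proof.
elim: cs => [|c cs IH] /=; first by rewrite big_ord0 !mul0r.
rewrite big_ord_recl /= expr0 mulr1.
have -> : \sum_(i < size cs) (nth 0%N cs (0 + i))%:R * r ^+ bump 0 i =
          r * \sum_(i < size cs) (nth 0%N cs i)%:R * r ^+ i.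
  by rewrite mulr_sumr; apply: eq_bigr => i _; rewrite /bump add1n exprS mulrCA.
rewrite natrD !natrM natrX -r_nd exprS.
set B := (mixed_horner n d cs)%:R in IH *; set S := \sum_(i < _) _ in IH *.
set D := (d%:R : rat) in IH *.
have -> : (c%:R * D ^+ size cs + r * D * B) * D =
          c%:R * (D * D ^+ size cs) + r * D * (B * D) by ring.
by rewrite IH; ring.
Qed.

Lemma single_difference s s' j : value s = value s' ->
  (forall i, i != j -> count_mem i s = count_mem i s') ->
  count_mem j s = count_mem j s'.
Proof.
move=> eq_val agree.
pose L := (maxn j (\max_(k <- s ++ s') k)).+1.
have lt_L k : k \in s ++ s' -> (k < L)%N.
  move=> ks; rewrite ltnS leq_max; apply/orP; right.
  exact: (@leq_bigmax_seq _ _ _ (fun k => k)).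
have j_lt : (j < L)%N by rewrite ltnS leq_maxl.
move: eq_val; rewrite (value_counts (L := L)) => [|k ks]; last by rewrite lt_L // mem_cat ks.
rewrite (value_counts (L := L)) => [|k ks]; last by rewrite lt_L // mem_cat ks orbT.
rewrite (bigD1 (Ordinal j_lt)) // [in RHS](bigD1 (Ordinal j_lt)) //=.
rewrite (eq_bigr (fun i : 'I_L => (count_mem (i : nat) s')%:R * r ^+ i)) => [|i neq_ij].
  move/addIr/(mulIf (expf_neq0 _ (lt0r_neq0 r_gt0))) => /eqP.
  by rewrite eqr_nat => /eqP.
by rewrite agree //; apply: contra neq_ij => /eqP ij; apply/eqP/val_inj.
Qed.

Lemma rigidity s s' : value s = value s' -> ~~ perm_eq s s' ->
  exists j M, [/\ (j < M)%N, count_mem j s <> count_mem j s',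
    count_mem j s = count_mem j s' %[mod n], count_mem M s <> count_mem M s'
    & count_mem M s = count_mem M s' %[mod d]].
Proof.
move=> eq_val not_perm.
pose L := (\max_(k <- s ++ s') k).+1.
have lt_L k : k \in s ++ s' -> (k < L)%N.
  by move=> ks; rewrite ltnS; exact: (@leq_bigmax_seq _ _ _ (fun k => k)).
have out_L k : (L <= k)%N -> count_mem k s = count_mem k s'.
  move=> le_Lk; have : k \notin s ++ s' by apply: contraL le_Lk => /lt_L; rewrite ltnNge.
  by rewrite mem_cat negb_or => /andP [/count_memPn -> /count_memPn ->].
pose cs t := mkseq (fun i => count_mem i t) L.
have nth_cs t i : (i < L)%N -> nth 0%N (cs t) i = count_mem i t.
  by move=> iL; rewrite nth_mkseq.
have size_cs t : size (cs t) = L by rewrite size_mkseq.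
have value_cs t : {subset t <= s ++ s'} ->
    value t = \sum_(i < size (cs t)) (nth 0%N (cs t) i)%:R * r ^+ i.
  move=> sub_t; rewrite size_cs (value_counts (L := L)) => [|k tk]; last exact/lt_L/sub_t.
  by apply: eq_bigr => i _; rewrite nth_cs.
have eq_horner : mixed_horner n d (cs s) = mixed_horner n d (cs s').
  apply/eqP; rewrite -(eqr_nat rat); apply/eqP; apply: (mulIf d_neq0).
  have sub_s : {subset s <= s ++ s'} by move=> k ks; rewrite mem_cat ks.
  have sub_s' : {subset s' <= s ++ s'} by move=> k ks; rewrite mem_cat ks orbT.
  by rewrite !mixed_horner_value -(value_cs s) // -(value_cs s') // eq_val !size_cs.
have neq_cs : cs s <> cs s'.
  move=> eq_cs; move/negP: not_perm; apply; apply/allP => k _ /=; apply/eqP.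
  by have [kL|/out_L //] := ltnP k L; rewrite -!nth_cs // eq_cs.
have eq_size : size (cs s) = size (cs s') by rewrite !size_cs.
have [j []] := mixed_horner_first_diff coprime_nd (ltnW n_gt1) eq_size eq_horner neq_cs.
rewrite size_cs => j_lt; rewrite !nth_cs // => neq_j below_j congr_j.
have [M []] := mixed_horner_last_diff coprime_nd (ltnW d_gt1) eq_size eq_horner neq_cs.
rewrite size_cs => M_lt; rewrite !nth_cs // => neq_M above_M congr_M.
exists j, M; split => //; rewrite ltn_neqAle; apply/andP; split.
  apply/eqP => eq_jM; apply: neq_j; apply: (single_difference eq_val) => i neq_ij.
  have [lt_ij|lt_ji|eq_ij] := ltngtP i j.
  - by rewrite -!nth_cs ?below_j // (ltn_trans lt_ij j_lt).
  - have [iL|/out_L //] := ltnP i L.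
    by rewrite -!nth_cs ?above_M // -eq_jM lt_ji.
  - by move: neq_ij; rewrite eq_ij eqxx.
rewrite leqNgt; apply/negP => lt_Mj; apply: neq_j.
by rewrite -!nth_cs ?above_M // lt_Mj.
Qed.

Definition fact_of (s : seq nat) : seq rat := sort <=%R [seq r ^+ k | k <- s].

Lemma perm_fact_of s : perm_eq (fact_of s) [seq r ^+ k | k <- s].
Proof. by rewrite /fact_of perm_sort. Qed.

Lemma fact_of_perm s s' : perm_eq s s' -> fact_of s = fact_of s'.
Proof. by move=> perm_ss'; apply/perm_sort_leP; apply: perm_map. Qed.

Lemma count_fact_of s k : count_mem (r ^+ k) (fact_of s) = count_mem k s.
Proof.
rewrite (permP (perm_fact_of s)) count_map; apply: eq_count => i /=.
by rewrite (inj_eq expr_r_inj).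
Qed.

Lemma size_fact_of s : size (fact_of s) = size s.
Proof. by rewrite size_sort size_map. Qed.

Lemma fdist_fact_of (U s s' : seq nat) :
  uniq U -> {subset s <= U} -> {subset s' <= U} ->
  fdist (fact_of s) (fact_of s') =
    maxn (\sum_(k <- U) (count_mem k s - count_mem k s'))
         (\sum_(k <- U) (count_mem k s' - count_mem k s)).
Proof.
move=> U_uniq sub_s sub_s'.
have sub_fact t : {subset t <= U} -> {subset fact_of t <= [seq r ^+ k | k <- U]}.
  by move=> sub_t a; rewrite (perm_mem (perm_fact_of t)) => /mapP [k /sub_t kU ->]; apply: map_f.
have U'_uniq : uniq [seq r ^+ k | k <- U] by rewrite (map_inj_uniq expr_r_inj).
rewrite (fdist_counts U'_uniq (sub_fact _ sub_s) (sub_fact _ sub_s')).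
by rewrite !big_map; congr maxn; apply: eq_bigr => k _; rewrite !count_fact_of.
Qed.

(* The reduced exponent multisets, those admitting no length-decreasing move:
   if d < n, no exponent occurs n times (n r^k cannot become d r^(k+1));
   if n < d, no positive exponent occurs d times (d r^k cannot become
   n r^(k-1)). *)
Definition reduced (s : seq nat) : bool :=
  if (d < n)%N then all (fun k => count_mem k s < n)%N s
  else all (fun k => (k == 0%N) || (count_mem k s < d)%N) s.

Lemma reduced_count_big s : (d < n)%N -> reduced s -> forall k, (count_mem k s < n)%N.
Proof.
rewrite /reduced => -> /allP s_red k.
by have [/s_red //|/count_memPn ->] := boolP (k \in s); apply: ltnW.
Qed.

Lemma reduced_count_small s : (n < d)%N -> reduced s ->
  forall k, (0 < k)%N -> (count_mem k s < d)%N.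
Proof.
rewrite /reduced => lt_nd; rewrite ltnNge ltnW //= => /allP s_red k k_gt0.
have [/s_red|/count_memPn ->] := boolP (k \in s); last exact: ltnW.
by rewrite -[k == 0%N]negbK -lt0n k_gt0.
Qed.

Lemma reduced_unique s s' : reduced s -> reduced s' -> value s = value s' ->
  perm_eq s s'.
Proof.
move=> red_s red_s' eq_val; apply/negPn/negP => not_perm.
have [j [M [lt_jM neq_j congr_j neq_M congr_M]]] := rigidity eq_val not_perm.
have [lt_dn|lt_nd|eq_nd] := ltngtP d n.
- have := reduced_count_big lt_dn red_s j; have := reduced_count_big lt_dn red_s' j.
  by case: (congr_dist congr_j neq_j); lia.
- have M_gt0 : (0 < M)%N by apply: leq_ltn_trans lt_jM.
  have := reduced_count_small lt_nd red_s M_gt0.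
  have := reduced_count_small lt_nd red_s' M_gt0.
  by case: (congr_dist congr_M neq_M); lia.
- by move: n_neq_d; rewrite eq_nd eqxx.
Qed.

(* The difference of lengths effected by one move. *)
Definition gap : nat := `|(n%:Z - d%:Z)%R|%N.

Lemma gap_gt0 : (0 < gap)%N.
Proof. by rewrite absz_gt0 subr_eq0 eqz_nat n_neq_d. Qed.

Lemma nseq_split (s : seq nat) k p : (p <= count_mem k s)%N ->
  exists w : seq nat, perm_eq s (nseq p k ++ w).
Proof.
elim: p s => [|p IH] s le_p; first by exists s.
have ks : k \in s by rewrite -has_pred1 has_count; apply: leq_trans le_p.
have perm_rem := perm_to_rem ks.
have [|w perm_w] := IH (rem k s).
  by move: le_p; rewrite (permP perm_rem) /= eqxx add1n ltnS.
by exists w; apply: (perm_trans perm_rem); rewrite /= perm_cons.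
Qed.

Lemma move_dist x y a b w : x != y ->
  fdist (fact_of (nseq a x ++ w)) (fact_of (nseq b y ++ w)) = maxn a b.
Proof.
move=> neq_xy.
pose U := undup (x :: y :: w).
have sub_U c z : z \in U -> {subset nseq c z ++ w <= U}.
  move=> zU k; rewrite mem_cat => /orP [/nseqP [-> _] //|wk].
  by rewrite mem_undup !inE wk !orbT.
have xU : x \in U by rewrite mem_undup mem_head.
have yU : y \in U by rewrite mem_undup !inE eqxx orbT.
rewrite (fdist_fact_of (undup_uniq _) (sub_U a x xU) (sub_U b y yU)).
have diff_count c z c' z' k :
    (count_mem k (nseq c z ++ w) - count_mem k (nseq c' z' ++ w))%N =
    ((z == k) * c - (z' == k) * c')%N.
  by rewrite !count_cat !count_nseq subnDr.
have sum_one c z c' z' : z \in U -> z != z' ->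
    (\sum_(k <- U) ((z == k) * c - (z' == k) * c'))%N = c.
  move=> zU neq_z; rewrite (bigD1_seq z) ?undup_uniq //= eqxx eq_sym (negPf neq_z).
  rewrite big1 => [|k neq_kz]; first by rewrite mul0n mul1n subn0 addn0.
  by rewrite eq_sym (negPf neq_kz).
rewrite (eq_bigr _ (fun k _ => diff_count _ _ _ _ k)).
rewrite (eq_bigr _ (fun k _ => diff_count _ _ _ _ k)).
by rewrite !sum_one // eq_sym.
Qed.

Lemma reduce_step s : ~~ reduced s -> exists s1, [/\ value s1 = value s,
  size s = (size s1 + gap)%N, (1 < size s1)%N
  & fdist (fact_of s) (fact_of s1) = maxn n d].
Proof.
rewrite /reduced; case: ltnP => cmp_nd /allPn [k ks].
- rewrite -leqNgt => /nseq_split [w perm_w].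
  exists (nseq d k.+1 ++ w); split.
  + by rewrite -value_move (value_perm perm_w).
  + rewrite (perm_size perm_w) !size_cat !size_nseq /gap (distnEl (ltnW cmp_nd)).
    by rewrite addnAC (subnKC (ltnW cmp_nd)).
  + by rewrite size_cat size_nseq; apply: leq_trans (leq_addr _ _).
  + rewrite (fact_of_perm perm_w) move_dist ?neq_ltn ?ltnSn ?orbT //.
    exact/maxn_idPl/ltnW.
- rewrite negb_or -leqNgt => /andP [k_neq0 /nseq_split [w perm_w]].
  have lt_nd : (n < d)%N by rewrite ltn_neqAle n_neq_d.
  case: k k_neq0 perm_w {ks} => [|k] // _ perm_w.
  exists (nseq n k ++ w); split.
  + by rewrite value_move (value_perm perm_w).
  + rewrite (perm_size perm_w) !size_cat !size_nseq /gap (distnEr (ltnW lt_nd)).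
    by rewrite addnAC (subnKC (ltnW lt_nd)).
  + by rewrite size_cat size_nseq; apply: leq_trans (leq_addr _ _).
  + rewrite (fact_of_perm perm_w) move_dist ?neq_ltn ?ltnSn ?orbT //.
    exact/maxn_idPl/ltnW.
Qed.

Lemma value_single s k : value s = r ^+ k -> size s = 1%N.
Proof.
have [N] := ubnP (size s); elim: N s => // N IH s size_s eq_val.
have [red_s|not_red] := boolP (reduced s).
  have red_k : reduced [:: k].
    by rewrite /reduced; case: ifP => _; rewrite /= eqxx /= ?n_gt1 ?d_gt1 ?orbT.
  by rewrite (perm_size (reduced_unique red_s red_k _)) // /value big_seq1.
have [s1 [val_s1 size_s1 s1_gt1 _]] := reduce_step not_red.
suff : size s1 = 1%N by move=> s1_eq1; rewrite s1_eq1 in s1_gt1.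
apply: IH; last by rewrite val_s1.
by rewrite -ltnS (leq_trans _ size_s) // size_s1 ltnS -addn1 leq_add2l gap_gt0.
Qed.

Lemma atom_power k : is_atom r (r ^+ k).
Proof.
split; first by exists [:: k]; rewrite big_seq1.
  by rewrite expf_neq0 // lt0r_neq0 // r_gt0.
move=> _ _ [s1 ->] [s2 ->] split_k.
have : size (s1 ++ s2) = 1%N by apply: (@value_single _ k); rewrite value_cat.
case: s1 {split_k} => [|k1 s1]; first by left; rewrite big_nil.
case: s2 => [|k2 s2]; first by right; rewrite big_nil.
by rewrite size_cat /= addnS.
Qed.

Lemma fact_of_fact s : is_fact r (value s) (fact_of s).
Proof.
split; first by apply: sort_sorted; exact: le_total.
- by move=> a; rewrite (perm_mem (perm_fact_of s)) => /mapP [k _ ->]; apply: atom_power.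
- by rewrite (perm_big _ (perm_fact_of s)) big_map.
Qed.

Lemma fact_is_fact_of x z : is_fact r x z -> exists s, z = fact_of s /\ value s = x.
Proof.
case=> z_sorted z_atoms <-.
have [s eq_z] : exists s, z = [seq r ^+ k | k <- s].
  clear z_sorted; elim: z z_atoms => [|a z IH] z_atoms; first by exists [::].
  have [k ->] := atom_is_power r_gt0 (z_atoms a (mem_head _ _)).
  have [|s ->] := IH; last by exists (k :: s).
  by move=> b zb; apply: z_atoms; rewrite inE zb orbT.
exists s; rewrite eq_z in z_sorted *; split; last by rewrite /value big_map.
by rewrite /fact_of sorted_sort //; exact: le_trans.
Qed.

Lemma inL_value x l : inL r x l <-> exists s, value s = x /\ size s = l.
Proof.
split=> [[z [/fact_is_fact_of [s [-> <-]] <-]]|[s [<- <-]]].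
  by exists s; rewrite size_fact_of.
by exists (fact_of s); rewrite size_fact_of; split => //; apply: fact_of_fact.
Qed.

Lemma inL_size s : inL r (value s) (size s).
Proof. by apply/inL_value; exists s. Qed.

(* Distinct factorizations are at distance at least max(n, d): at the two
   exponents given by rigidity they differ by at least n, resp. d, atoms. *)
Lemma fdist_ge_max s s' : value s = value s' -> ~~ perm_eq s s' ->
  (maxn n d <= fdist (fact_of s) (fact_of s'))%N.
Proof.
move=> eq_val not_perm.
have [j [M [_ neq_j congr_j neq_M congr_M]]] := rigidity eq_val not_perm.
pose U := undup (s ++ s').
have sub_s : {subset s <= U} by move=> k ks; rewrite mem_undup mem_cat ks.
have sub_s' : {subset s' <= U} by move=> k ks; rewrite mem_undup mem_cat ks orbT.
rewrite (fdist_fact_of (undup_uniq _) sub_s sub_s').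
have in_U i : count_mem i s <> count_mem i s' -> i \in U.
  move=> neq_i; rewrite mem_undup mem_cat.
  apply/negPn/negP; rewrite negb_or => /andP [/count_memPn si /count_memPn s'i].
  by apply: neq_i; rewrite si s'i.
have le_sum i (F : nat -> nat) : i \in U -> (F i <= \sum_(k <- U) F k)%N.
  by move=> iU; rewrite (bigD1_seq i) ?undup_uniq //= leq_addr.
set P := (\sum_(k <- U) _)%N; set Q := (\sum_(k <- U) _)%N.
have lower p i : count_mem i s = count_mem i s' %[mod p] ->
    count_mem i s <> count_mem i s' -> (p <= P)%N \/ (p <= Q)%N.
  move=> congr_i neq_i; have iU := in_U i neq_i.
  case: (congr_dist congr_i neq_i) => le_i; [left|right];
    apply: leq_trans (le_sum i _ iU);
    by rewrite leq_subRL ?(leq_trans (leq_addr _ _) le_i).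
have := lower n j congr_j neq_j; have := lower d M congr_M neq_M.
by rewrite geq_max !leq_max => -[] -> [] ->; rewrite ?orbT.
Qed.

Lemma reduction s : exists s0 m, [/\ reduced s0, value s0 = value s,
  size s = (size s0 + m * gap)%N,
  forall m', (m' <= m)%N -> inL r (value s) (size s0 + m' * gap)
  & (~~ reduced s -> 0 < m)%N /\
    chain r (value s) (maxn n d) (fact_of s) (fact_of s0)].
Proof.
have [N] := ubnP (size s); elim: N s => // N IH s size_s.
have [red_s|not_red] := boolP (reduced s).
  exists s, 0%N; rewrite mul0n addn0; split => //.
    by move=> m'; rewrite leqn0 => /eqP ->; rewrite mul0n addn0; apply: inL_size.
  by split=> [/negP|]; last apply: chain_refl.
have [s1 [val_s1 size_s1 _ dist_s1]] := reduce_step not_red.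
have [|s0 [m [red_s0 val_s0 size_s0 lengths [_ chain_s1]]]] := IH s1.
  by rewrite -ltnS (leq_trans _ size_s) // size_s1 ltnS -addn1 leq_add2l gap_gt0.
rewrite val_s1 in val_s0 lengths chain_s1.
exists s0, m.+1; split => //.
- by rewrite size_s1 size_s0 mulSnr addnA.
- move=> m'; rewrite leq_eqVlt => /orP [/eqP ->|/lengths //].
  by rewrite mulSnr addnA -size_s0 -size_s1; apply: inL_size.
- split => //; apply: chain_cons chain_s1; first by rewrite dist_s1.
  by rewrite -val_s1; apply: fact_of_fact.
Qed.

(* Every element has catenary degree at most max(n, d): any two
   factorizations are linked through the common reduced form. *)
Lemma catenary_ok_max x : catenary_ok r x (maxn n d).
Proof.
move=> z z' /fact_is_fact_of [s [-> <-]] /fact_is_fact_of [s' [-> eq_val]].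
have [s0 [m [red_s0 val_s0 _ _ [_ chain_s]]]] := reduction s.
have [s0' [m' [red_s0' val_s0' _ _ [_ chain_s']]]] := reduction s'.
have eq_s0 : fact_of s0 = fact_of s0'.
  by apply: fact_of_perm; apply: reduced_unique; rewrite // val_s0 val_s0' eq_val.
rewrite eq_val in chain_s'; apply: chain_trans chain_s _.
by rewrite eq_s0; apply: chain_sym chain_s'; rewrite -eq_val; apply: fact_of_fact.
Qed.

Lemma chain_below_max x N z z' : (N < maxn n d)%N ->
  is_fact r x z -> chain r x N z z' -> z = z'.
Proof.
move=> lt_N fact_z ch; have [//|/eqP neq] := eqVneq z z'.
have [u [v [/fact_is_fact_of [su [-> val_u]] /fact_is_fact_of [sv [-> val_v]]]]] :=
  chain_distinct_link fact_z ch neq.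
move=> neq_uv le_N; have not_perm : ~~ perm_eq su sv.
  by apply/negP => /fact_of_perm.
have := fdist_ge_max (etrans val_u (esym val_v)) not_perm.
by move=> /leq_trans /(_ le_N); rewrite leqNgt lt_N.
Qed.

Lemma catenary_ge_max x N z z' : is_fact r x z -> is_fact r x z' -> z <> z' ->
  catenary_ok r x N -> (maxn n d <= N)%N.
Proof.
move=> fact_z fact_z' neq ok_N; rewrite leqNgt; apply/negP => lt_N.
exact: neq (chain_below_max lt_N fact_z (ok_N _ _ fact_z fact_z')).
Qed.

Lemma length_shape x s0 l : reduced s0 -> value s0 = x -> inL r x l ->
  exists m, l = (size s0 + m * gap)%N.
Proof.
move=> red_s0 val_s0 /inL_value [s [val_s <-]].
have [s1 [m [red_s1 val_s1 size_s _ _]]] := reduction s.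
exists m; rewrite size_s; congr addn; apply: perm_size; apply: reduced_unique => //.
by rewrite val_s1 val_s.
Qed.

Lemma length_down x s0 m m' : reduced s0 -> value s0 = x ->
  inL r x (size s0 + m * gap) -> (m' <= m)%N -> inL r x (size s0 + m' * gap).
Proof.
move=> red_s0 val_s0 /inL_value [s [val_s size_s]] le_m'.
have [s1 [m1 [red_s1 val_s1 size_s1 lengths _]]] := reduction s.
have eq_size : size s1 = size s0.
  by apply: perm_size; apply: reduced_unique; rewrite // val_s1 val_s.
have eq_m : m1 = m.
  apply/eqP; rewrite -(eqn_pmul2r gap_gt0); apply/eqP.
  by move: size_s1; rewrite size_s eq_size => /addnI.
by rewrite -val_s -eq_size; apply: lengths; rewrite eq_m.
Qed.

Lemma length_next x s0 z z' : reduced s0 -> value s0 = x ->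
  is_fact r x z -> is_fact r x z' -> z <> z' -> inL r x (size s0 + gap).
Proof.
move=> red_s0 val_s0 /fact_is_fact_of [s [eq_z val_s]].
move=> /fact_is_fact_of [s' [eq_z' val_s']] neq.
have [t [not_red_t val_t]] : exists t, ~~ reduced t /\ value t = x.
  have [red_s|] := boolP (reduced s); last by exists s.
  have [red_s'|] := boolP (reduced s'); last by exists s'.
  exfalso; apply: neq; rewrite eq_z eq_z'; apply: fact_of_perm.
  by apply: reduced_unique; rewrite // val_s val_s'.
have [t0 [m [red_t0 val_t0 _ lengths [m_gt0 _]]]] := reduction t.
have eq_size : size t0 = size s0.
  by apply: perm_size; apply: reduced_unique; rewrite // val_t0 val_t.
by rewrite -val_t -eq_size -[gap]mul1n; apply: lengths; apply: m_gt0.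
Qed.

Lemma delta_element x z z' : is_fact r x z -> is_fact r x z' -> z <> z' ->
  forall e, in_Delta r x e <-> e = gap.
Proof.
move=> fact_z fact_z' neq e.
have [s [_ val_s]] := fact_is_fact_of fact_z.
have [s0 [_ [red_s0 val_s0 _ _ _]]] := reduction s.
rewrite val_s in val_s0.
have length_mono m m' : (size s0 + m * gap < size s0 + m' * gap)%N = (m < m')%N.
  by rewrite ltn_add2l ltn_pmul2r // gap_gt0.
split.
- move=> [e_gt0 [l [l_len le_len between]]].
  have [m1 eq_l] := length_shape red_s0 val_s0 l_len.
  have [m2 eq_le] := length_shape red_s0 val_s0 le_len.
  have lt_m12 : (m1 < m2)%N by rewrite -length_mono -eq_l -eq_le -{1}[l]addn0 ltn_add2l.
  have [lt_m21|gt_m21|eq_m2] := ltngtP m2 m1.+1.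
  + by rewrite ltnS leqNgt lt_m12 in lt_m21.
  + exfalso; apply: (between (size s0 + m1.+1 * gap)).
      by rewrite eq_le eq_l !length_mono ltnSn gt_m21.
    by apply: (length_down red_s0 val_s0 (m := m2)); rewrite -?eq_le // ltnW.
  + by apply/eqP; rewrite -(eqn_add2l l) eq_le eq_l eq_m2 mulSnr addnA.
- move=> ->; split; first exact: gap_gt0.
  exists (size s0); split.
  + by rewrite -val_s0; apply: inL_size.
  + exact: length_next red_s0 val_s0 fact_z fact_z' neq.
  + move=> k /andP [lt_k k_lt] /(length_shape red_s0 val_s0) [[|m] eq_k].
      by rewrite eq_k mul0n addn0 ltnn in lt_k.
    by rewrite eq_k -[X in (_ < _ + X)%N]mul1n length_mono ltnS ltn0 in k_lt.
Qed.

(* The element n = n r^0 = d r^1 has the two factorizations n * 1 and d * r. *)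
Definition x0 : rat := value (nseq n 0).

Lemma x0_in_Sr : inSr r x0.
Proof. by exists (nseq n 0). Qed.

Lemma x0_neq0 : x0 != 0.
Proof. by rewrite value_eq0; case: n n_gt1. Qed.

Lemma x0_two_facts : [/\ is_fact r x0 (fact_of (nseq n 0)),
  is_fact r x0 (fact_of (nseq d 1)) & fact_of (nseq n 0) <> fact_of (nseq d 1)].
Proof.
split; first exact: fact_of_fact.
- by rewrite /x0 -[nseq n 0]cats0 value_move cats0; apply: fact_of_fact.
- move=> /(congr1 size); rewrite !size_fact_of !size_nseq => /eqP.
  by rewrite (negPf n_neq_d).
Qed.

Lemma delta_monoid e :
  (exists x, [/\ inSr r x, x != 0 & in_Delta r x e]) <-> e = gap.
Proof.
split=> [[x [_ _ delta_e]]|->].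
  have [e_gt0 [l [[z [fact_z size_z]] [z' [fact_z' size_z']] _]]] := delta_e.
  have neq : z <> z'.
    move=> eq_z; move: size_z'; rewrite -eq_z size_z => /eqP.
    by rewrite -{1}[l]addn0 eqn_add2l eq_sym => /eqP e0; rewrite e0 in e_gt0.
  exact/(delta_element fact_z fact_z' neq).
exists x0; split; [exact: x0_in_Sr|exact: x0_neq0|].
by have [fact_1 fact_2 neq] := x0_two_facts; apply/(delta_element fact_1 fact_2 neq).
Qed.

Lemma catenary_x0 : cat_deg_is r x0 (Some (maxn n d)).
Proof.
have [fact_1 fact_2 neq] := x0_two_facts.
by split=> [|M]; [exact: catenary_ok_max|exact: catenary_ge_max fact_1 fact_2 neq].
Qed.

Lemma catenary_bounded x c : cat_deg_is r x c ->
  exists N, c = Some N /\ (N <= maxn n d)%N.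
Proof.
case: c => [N [_ N_min]|not_ok]; last by case: (not_ok _ (@catenary_ok_max x)).
by exists N; split => //; apply: N_min; apply: catenary_ok_max.
Qed.

Lemma catenary_set c :
  (exists x, [/\ inSr r x, cat_deg_is r x c & c <> Some 0%N]) <->
  c = Some (maxn n d).
Proof.
split=> [[x [_ cat_c c_neq0]]|->]; last first.
  exists x0; split; [exact: x0_in_Sr|exact: catenary_x0|].
  by case=> /eqP; rewrite gtn_eqF // (leq_trans _ (leq_maxl _ _)) // ltnW.
have [N [eq_c le_N]] := catenary_bounded cat_c; subst c.
have [ok_N N_min] := cat_c; congr Some; apply/eqP; rewrite eqn_leq le_N leqNgt.
apply/negP => lt_N; apply: c_neq0; congr Some; apply/eqP; rewrite -leqn0.
apply: N_min => z z' fact_z fact_z'.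
by rewrite (chain_below_max lt_N fact_z (ok_N _ _ fact_z fact_z')); apply: chain_refl.
Qed.

(* Part (1) for r < 1: the element x0 has unboundedly long factorizations,
   as n r^k may be replaced by d > n copies of r^(k+1) over and over. *)
Lemma not_BF : (n < d)%N -> ~ BF r.
Proof.
move=> lt_nd BF_r.
have long j : exists w, value (nseq n j ++ w) = x0 /\ (j <= size w)%N.
  elim: j => [|j [w [val_w le_j]]]; first by exists [::]; rewrite cats0.
  exists (nseq (d - n) j.+1 ++ w); split.
    by rewrite -val_w (value_move j w) catA -nseqD subnKC // ltnW.
  by rewrite size_cat size_nseq -addn1 addnC leq_add // subn_gt0.
have [N bound_N] := BF_r x0 x0_in_Sr.
have [w [val_w le_w]] := long N.+1.
have := bound_N (size (nseq n N.+1 ++ w)); rewrite -val_w => /(_ (inL_size _)).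
by rewrite size_cat leqNgt ltn_addl.
Qed.

End NonIntegral.

Lemma nr_dr_eq (r : rat) : 0 < r -> r * (dr r)%:R = (nr r)%:R.
Proof.
move=> r_gt0; rewrite /nr /dr !natr_absz !gtr0_norm ?numq_gt0 ?denq_gt0 //.
by rewrite numqE.
Qed.

(* S_(1/d) with d > 1 is not atomic: 1 = d (1/d) and the power (1/d)^k of
   any atom would itself split as d copies of (1/d)^(k+1). *)
Lemma not_atomic_unit_fraction (r : rat) (d : nat) :
  0 < r -> (1 < d)%N -> r * d%:R = 1 -> ~ atomic r.
Proof.
move=> r_gt0 d_gt1 r_d atomic_r.
have [|s [s_atoms sum_1]] := atomic_r 1 _ (oner_neq0 _).
  by exists [:: 0%N]; rewrite big_seq1 expr0.
case: s s_atoms sum_1 => [|a s] s_atoms; first by rewrite big_nil => /eqP; rewrite oner_eq0.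
move=> _.
have a_atom := s_atoms a (mem_head _ _).
have [k a_k] := atom_is_power r_gt0 a_atom.
case: a_atom => _ _; rewrite a_k => a_split.
have copies m : \sum_(i <- nseq m k.+1) r ^+ i = r ^+ k.+1 *+ m.
  by rewrite big_nseq; elim: m => //= m ->; rewrite mulrS.
have rk_neq0 j : r ^+ j != 0 by rewrite expf_neq0 // lt0r_neq0.
have split_k : r ^+ k = r ^+ k.+1 + \sum_(i <- nseq d.-1 k.+1) r ^+ i.
  rewrite copies -mulrS prednK ?(ltnW d_gt1) // -mulr_natl exprS mulrA.
  by rewrite [d%:R * r]mulrC r_d mul1r.
have Sr_k : inSr r (r ^+ k.+1) by exists [:: k.+1]; rewrite big_seq1.
have Sr_copies : inSr r (\sum_(i <- nseq d.-1 k.+1) r ^+ i) by exists (nseq d.-1 k.+1).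
case: (a_split _ _ Sr_k Sr_copies split_k) => /eqP; first by rewrite (negPf (rk_neq0 _)).
by rewrite copies mulrn_eq0 (negPf (rk_neq0 _)) orbF -subn1 subn_eq0 leqNgt d_gt1.
Qed.

Lemma nonintegral_fraction (r : rat) : 0 < r -> atomic r ->
  ~ (exists k : nat, r = k%:R) ->
  [/\ (1 < nr r)%N, (1 < dr r)%N, coprime (nr r) (dr r) & r * (dr r)%:R = (nr r)%:R].
Proof.
move=> r_gt0 atomic_r not_int; have r_nd := nr_dr_eq r_gt0.
have dr_gt1 : (1 < dr r)%N.
  rewrite ltn_neqAle lt0n absz_eq0 denq_neq0 andbT; apply/negP => /eqP dr1.
  by apply: not_int; exists (nr r); rewrite -r_nd -dr1 mulr1.
have nr_gt1 : (1 < nr r)%N.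
  rewrite ltn_neqAle lt0n absz_eq0 numq_eq0 (gt_eqF r_gt0) andbT.
  apply/negP => /eqP nr1; apply: (not_atomic_unit_fraction r_gt0 dr_gt1) => //.
  by rewrite r_nd -nr1.
by split => //; apply: coprime_num_den.
Qed.

Lemma sum_nseq0 (r : rat) m : \sum_(i <- nseq m 0%N) r ^+ i = m%:R.
Proof.
rewrite big_nseq expr0.
by elim: m => [|m IH] //=; rewrite IH -add1n natrD.
Qed.

(* For r = k an integer the only atom is 1: for k >= 2 any higher power
   k^(j+1) >= 2 splits as 1 + (k^(j+1) - 1). *)
Lemma integer_atom (r : rat) (k : nat) : r = k%:R -> 0 < r ->
  forall a, is_atom r a -> a = 1.
Proof.
move=> r_k r_gt0 a a_atom; have [[|j] a_pow] := atom_is_power r_gt0 a_atom.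
  by rewrite a_pow expr0.
case: k r_k r_gt0 => [|[|k]] r_k r_pos.
- by rewrite r_k ltxx in r_pos.
- by rewrite a_pow r_k expr1n.
have [m a_m] : exists m, a = m.+2%:R.
  have ge2 : (2 <= k.+2 ^ j.+1)%N.
    by rewrite expnS (@leq_trans k.+2) // leq_pmulr // expn_gt0.
  exists (k.+2 ^ j.+1).-2; rewrite a_pow r_k -natrX.
  by move: ge2; case: (k.+2 ^ j.+1)%N => [|[|x]].
have [_ _ a_split] := a_atom.
have Sr_1 : inSr r 1 by exists [:: 0%N]; rewrite big_seq1.
have Sr_m : inSr r m.+1%:R by exists (nseq m.+1 0%N); rewrite sum_nseq0.
have a_1m : a = 1 + m.+1%:R by rewrite a_m -add1n natrD.
by case: (a_split _ _ Sr_1 Sr_m a_1m) => /eqP; rewrite ?oner_eq0 ?pnatr_eq0.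
Qed.

(* For r = k an integer all atoms equal 1, so factorizations are unique. *)
Lemma integer_fact_unique (r : rat) (k : nat) x z z' : r = k%:R -> 0 < r ->
  is_fact r x z -> is_fact r x z' -> z = z'.
Proof.
move=> r_k r_gt0.
have ones t : is_fact r x t -> t = nseq (size t) 1 /\ (size t)%:R = x.
  case=> _ t_atoms <-.
  have t1 a : a \in t -> a = 1 by move/t_atoms/(integer_atom r_k r_gt0).
  split; first by apply/all_pred1P/allP => a /t1 ->; rewrite /= eqxx.
  by rewrite -sum1_size natr_sum; apply: eq_big_seq => a /t1 ->.
move=> /ones [eq_z size_z] /ones [eq_z' size_z'].
by rewrite eq_z eq_z'; congr nseq; apply/eqP; rewrite -(eqr_nat rat) size_z size_z'.
Qed.

Lemma integer_case (r : rat) (k : nat) : 0 < r -> r = k%:R ->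
  (exists f : nat -> rat,
     [/\ injective f, f 0%N = 0, (forall a b, f (a + b)%N = f a + f b)
       & forall x, inSr r x <-> exists m, x = f m]) /\
  (forall x, inSr r x -> x != 0 ->
     (forall e, ~ in_Delta r x e) /\ cat_deg_is r x (Some 0%N)).
Proof.
move=> r_gt0 r_k; split.
  exists (fun m => m%:R); split=> [a b /eqP|//|a b|x]; first by rewrite eqr_nat => /eqP.
    exact: natrD.
  split=> [[s ->]|[m ->]]; last by exists (nseq m 0%N); rewrite sum_nseq0.
  exists (\sum_(i <- s) k ^ i)%N; rewrite natr_sum.
  by apply: eq_bigr => i _; rewrite r_k natrX.
move=> x _ _; have uniq_fact := @integer_fact_unique r k x _ _ r_k r_gt0.
split=> [e [e_gt0 [l [[z [fact_z <-]] [z' [fact_z' size_z']] _]]]|].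
  move: size_z'; rewrite (uniq_fact z z') // -[X in X = _]addn0 => /addnI e0.
  by rewrite -e0 in e_gt0.
split=> [z z' fact_z fact_z'|M _] //.
by rewrite (uniq_fact z z') //; apply: chain_refl.
Qed.

(* For r >= 1 every atom is >= 1, so a factorization of x has at most x atoms. *)
Lemma BF_of_ge1 (r : rat) : 1 <= r -> BF r.
Proof.
move=> r_ge1 _ [s ->]; set x := \sum_(k <- s) r ^+ k.
have x_ge0 : 0 <= x by apply: sumr_ge0 => i _; rewrite exprn_ge0 // (le_trans ler01).
exists (Num.Def.archi_bound x) => l [z [[_ z_atoms sum_z] <-]].
have le_x : (size z)%:R <= x.
  rewrite -sum_z -sum1_size natr_sum big_seq_cond [leRHS]big_seq_cond.
  apply: ler_sum => a /andP [/z_atoms a_atom _].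
  have [j ->] := atom_is_power (lt_le_trans ltr01 r_ge1) a_atom.
  exact: exprn_ege1.
by have := le_lt_trans le_x (archi_boundP x_ge0); rewrite ltr_nat => /ltnW.
Qed.

Lemma BF_iff (r : rat) : 0 < r -> atomic r -> BF r <-> 1 <= r.
Proof.
move=> r_gt0 atomic_r; split=> [BF_r|]; last exact: BF_of_ge1.
rewrite leNgt; apply/negP => r_lt1.
have not_int : ~ exists k : nat, r = k%:R.
  by move=> [[|[|k]] r_k]; move: r_gt0 r_lt1; rewrite r_k ?ltxx // ltrn1.
have [n_gt1 d_gt1 co r_nd] := nonintegral_fraction r_gt0 atomic_r not_int.
apply: (not_BF n_gt1 d_gt1 co r_nd _ BF_r).
by rewrite -(ltr_nat rat) -r_nd gtr_pMl // ltr0n (ltnW d_gt1).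
Qed.

Unset Implicit Arguments.

Theorem corollary3p4 (r : rat) (hr : 0 < r) (hat : atomic r) :
  (* (1) *)
  (BF r <-> 1 <= r) /\
  (* (2) *)
  ((exists k : nat, r = k%:R) ->
     (exists f : nat -> rat,
        [/\ injective f, f 0%N = 0, (forall a b, f (a + b)%N = f a + f b)
          & forall x, inSr r x <-> exists n, x = f n]) /\
     (forall x, inSr r x -> x != 0 ->
        (forall d, ~ in_Delta r x d) /\ cat_deg_is r x (Some 0%N))) /\
  (* (3) *)
  (~ (exists k : nat, r = k%:R) ->
     (forall x, inSr r x ->
        (exists z z', [/\ is_fact r x z, is_fact r x z' & z <> z']) ->
        forall d, in_Delta r x d <-> d = `|(nr r)%:Z - (dr r)%:Z|%N) /\
     (forall d, (exists x, [/\ inSr r x, x != 0 & in_Delta r x d]) <->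
                d = `|(nr r)%:Z - (dr r)%:Z|%N)) /\
  (* (4) *)
  (~ (exists k : nat, r = k%:R) ->
     (forall c : option nat,
        (exists x, [/\ inSr r x, cat_deg_is r x c & c <> Some 0%N]) <->
        c = Some (maxn (nr r) (dr r))) /\
     ((forall x c, inSr r x -> cat_deg_is r x c ->
         exists N, c = Some N /\ (N <= maxn (nr r) (dr r))%N) /\
      exists x, inSr r x /\ cat_deg_is r x (Some (maxn (nr r) (dr r))))).
Proof.
split; first exact: BF_iff.
split; first by move=> [k r_k]; apply: integer_case hr r_k.
split=> not_int;
  have [n_gt1 d_gt1 co r_nd] := nonintegral_fraction hr hat not_int.
  split=> [x _ [z [z' [fact_z fact_z' neq]]]|]; last exact: delta_monoid.
  exact: delta_element n_gt1 d_gt1 co r_nd x z z' fact_z fact_z' neq.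
split; first exact: catenary_set.
split=> [x c _|]; first exact: catenary_bounded.
by exists (x0 r (nr r)); split; [apply: x0_in_Sr|apply: catenary_x0].
Qed.
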